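(* Let $(A,C,k)$ be an instance and let $W$ be an affordable committee satisfying EJR+. Then every AV-completion of $W$ has utilitarian ratio at least $\frac{1}{4\sqrt{k}}-\frac{1}{2k}$.
   Context: An instance $(A,C,k)$ consists of a finite nonempty candidate set $C$, voters $N=\{1,\dots,n\}$, approval sets $A_i\subseteq C$, and a committee size $1\le k\le |C|$. $N_c=\{i: c\in A_i\}$. A committee is $W\subseteq C$ with $|W|\le k$. $\mathrm{sw}(W)=\sum_i|A_i\cap W|$; the utilitarian ratio is $\mathrm{sw}(W)/\max\{\mathrm{sw}(W'):|W'|=k\}$. An AV-completion of $W$ is $W\cup T$ with $T\subseteq C\setminus W$, $|T|=k-|W|$, maximizing $\sum_{c\in T}|N_c|$. $W$ is affordable if there are $p_i:C\to\mathbb{R}_{\ge0}$ with $p_i(c)=0$ for $c\notin A_i$, $\sum_c p_i(c)\le k/n$, $\sum_i p_i(c)=1$ for $c\in W$, $\sum_i p_i(c)=0$ for $c\notin W$. $W$ satisfies EJR+ if for every $\ell\in\{1,\dots,k\}$ and every group $N'\subseteq N$ with $|N'|\ge \ell n/k$ and $\bigcap_{i\in N'}A_i\neq\emptyset$, either some $i\in N'$ has $|A_i\cap W|\ge\ell$ or $\bigcap_{i\in N'}A_i\subseteq W$. *)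

From HB Require Import structures.
From mathcomp Require Import all_boot all_order all_algebra.
From mathcomp Require Import reals.
Set Implicit Arguments. Unset Strict Implicit. Unset Printing Implicit Defensive.
Import Order.TTheory GRing.Theory Num.Theory.
Local Open Scope ring_scope.

Section Defs.
Variables (C : finType) (n : nat) (A : 'I_n -> {set C}) (k : nat).

Definition supporters (c : C) : {set 'I_n} := [set i | c \in A i].

Definition sw (W : {set C}) : nat := (\sum_(i < n) #|A i :&: W|)%N.

Definition opt_sw : nat := (\max_(W' : {set C} | #|W'| == k) sw W')%N.

Definition util_ratio (R : realType) (W : {set C}) : R :=
  (sw W)%:R / (opt_sw)%:R.

Definition AV_completion (W W' : {set C}) : Prop :=
  exists T : {set C},
    [/\ T \subset ~: W, #|T| = (k - #|W|)%N,
        (forall T2 : {set C}, T2 \subset ~: W -> #|T2| = (k - #|W|)%N ->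
           (\sum_(c in T2) #|supporters c| <= \sum_(c in T) #|supporters c|)%N)
      & W' = W :|: T].

Definition affordable (R : realType) (W : {set C}) : Prop :=
  exists p : 'I_n -> C -> R,
    [/\ forall i c, 0 <= p i c,
        forall i c, c \notin A i -> p i c = 0,
        forall i, \sum_(c : C) p i c <= k%:R / n%:R,
        forall c, c \in W -> \sum_(i < n) p i c = 1
      & forall c, c \notin W -> \sum_(i < n) p i c = 0].

Definition common (N' : {set 'I_n}) : {set C} := \bigcap_(i in N') A i.

Definition EJRplus (R : realType) (W : {set C}) : Prop :=
  forall (l : nat) (N' : {set 'I_n}),
    (1 <= l <= k)%N ->
    (#|N'|%:R : R) >= l%:R * n%:R / k%:R ->
    common N' != set0 ->
    (exists2 i, i \in N' & (l <= #|A i :&: W|)%N) \/ common N' \subset W.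

End Defs.

(* Let S = sw(W') and let h be the largest approval count |N_c| of a candidate
   c outside W'.  An optimal committee gets at most S from its members in W'
   and at most kh from the others, so opt <= S + kh.  Affordability gives
   k|N_c| >= n on W and the AV-completion gives |N_c| >= h on W' \ W,
   so min(kh, n) <= S.  If kh > n, take such a c with |N_c| = h: for every
   l <= k, EJR+ applied to the voters of N_c with fewer than l approved
   members of W (they all approve c, which is not in W) shows that fewer than
   ln/k of them exist, while the others contribute at least l each to S.  With
   l = kh/(2n) this yields (kh)^2 <= 8kS^2, hence opt^2 <= 16kS^2 and the ratio
   is at least 1/(4 sqrt k), which is stronger than the claimed bound. *)

From HB Require Import structures.
From mathcomp Require Import all_boot all_order all_algebra.
From mathcomp Require Import reals.
From mathcomp Require Import zify.
Set Implicit Arguments.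
Unset Strict Implicit.
Unset Printing Implicit Defensive.
Import Order.TTheory GRing.Theory Num.Theory.

Lemma sub_leq_sum (I : finType) (P Q : pred I) (F : I -> nat) :
  (forall i, P i -> Q i) -> \sum_(i | P i) F i <= \sum_(i | Q i) F i.
Proof. exact: (sub_le_big leqnn (fun a b => leq_addr b a)). Qed.

Lemma sqr_support_bound (k n h S : nat) :
  0 < n -> h <= n -> minn (k * h) n <= S ->
  (0 < h -> forall l, 0 < l <= k ->
     exists2 m, l * m <= S & k * h < l * n + k * m) ->
  (k * h) ^ 2 <= 8 * k * S ^ 2.
Proof.
move=> n_gt0 h_le_n min_le_S split_h.
have [small | large] := leqP (k * h) n.
  have khS : k * h <= S by rewrite -(minn_idPl small).
  have [-> | k_gt0] := posnP k; first by rewrite !mul0n.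
  nia.
have n_le_S : n <= S by rewrite -(minn_idPr (ltnW large)).
have k_gt0 : 0 < k by nia.
(* [l] is maximal with [2 * l * n <= k * h]; this forces [h < 2 * m] below. *)
set l := k * h %/ (2 * n).
have l_lo : l * (2 * n) <= k * h by rewrite leq_divM.
have l_hi : k * h < l.+1 * (2 * n) by rewrite ltn_ceil // muln_gt0.
have [l0 | l_gt0] := posnP l.
  by move: l_hi; rewrite l0; nia.
have l_le_k : l <= k.
  by rewrite -(leq_pmul2r (_ : 0 < 2 * n)) ?muln_gt0 //; nia.
have h_gt0 : 0 < h by nia.
have /(split_h h_gt0 l)[m lm_le_S kh_lt] : 0 < l <= k by rewrite l_gt0 l_le_k.
have lh_le : l * h <= 2 * S by nia.
have : l * (k * h) ^ 2 <= 4 * k * S ^ 2 * l.+1.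
  have := leq_mul lh_le (leq_mul (leqnn k) (ltnW l_hi)); nia.
nia.
Qed.

Lemma sqr_add_bound (k S y : nat) :
  0 < k -> y ^ 2 <= 8 * k * S ^ 2 -> (S + y) ^ 2 <= 16 * k * S ^ 2.
Proof.
move=> k_gt0 y_le.
suff : S + 2 * y <= 8 * k * S by nia.
rewrite leqNgt; apply/negP => lt.
have : ((8 * k - 1) * S) ^ 2 < (2 * y) ^ 2 by rewrite ltn_sqr; lia.
have : 32 * k <= (8 * k - 1) ^ 2 by nia.
nia.
Qed.

Section Committees.
Variables (C : finType) (n : nat) (A : 'I_n -> {set C}) (k : nat).

Lemma sw_supporters (X : {set C}) : sw A X = \sum_(c in X) #|supporters A c|.
Proof.
rewrite /sw; under [LHS]eq_bigr => i _ do rewrite -sum1_card.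
under [RHS]eq_bigr => c _ do rewrite -sum1_card.
rewrite (exchange_big_dep (mem X)) => [|i c _ /setIP[] //].
apply: eq_bigr => c cX; apply: eq_bigl => i.
by rewrite !inE (cX : c \in X) andbT.
Qed.

Lemma sw_subset (X Y : {set C}) : X \subset Y -> sw A X <= sw A Y.
Proof. by move=> XY; apply: leq_sum => i _; apply/subset_leq_card/setIS. Qed.

Definition max_support_outside (X : {set C}) : nat :=
  \max_(c in ~: X) #|supporters A c|.

Lemma max_support_outside_le_n (X : {set C}) : max_support_outside X <= n.
Proof.
by apply/bigmax_leqP => c _; rewrite (leq_trans (max_card _)) ?card_ord.
Qed.

Lemma max_support_outsideP (X : {set C}) : 0 < max_support_outside X ->
  exists2 c, c \notin X & max_support_outside X = #|supporters A c|.
Proof.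
rewrite /max_support_outside.
have [X0 | ] := posnP #|~: X|; first by rewrite (cards0_eq X0) big_set0.
case/(eq_bigmax_cond (fun c => #|supporters A c|)) => c.
by rewrite inE => cX ->; exists c.
Qed.

Lemma opt_sw_le (X : {set C}) :
  opt_sw A k <= sw A X + k * max_support_outside X.
Proof.
apply/bigmax_leqP => Y /eqP cardY.
rewrite !sw_supporters (big_setID X); apply: leq_add.
  by apply: sub_leq_sum => c /setIP[].
rewrite -cardY -sum_nat_const.
apply: leq_trans (_ : \sum_(c in Y :\: X) max_support_outside X <= _).
  by apply: leq_sum => c /setDP[_ cX]; apply: leq_bigmax_cond; rewrite inE.
by apply: sub_leq_sum => c /setDP[].
Qed.

Section Completion.
Variables (W W' : {set C}).
Hypothesis W'_AV : AV_completion A k W W'.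

Lemma AV_completion_subset : W \subset W'.
Proof. by case: W'_AV => T [_ _ _ ->]; apply: subsetUl. Qed.

Lemma AV_completion_card : #|W| <= k -> #|W'| = k.
Proof.
case: W'_AV => T [TW cardT _ ->] Wk.
rewrite cardsU setIC disjoint_setI0 ?disjoints_subset // cards0 subn0 cardT.
by rewrite subnKC.
Qed.

Lemma AV_completion_support c :
  c \in W' -> c \notin W -> max_support_outside W' <= #|supporters A c|.
Proof.
case: W'_AV => T [TW cardT T_max ->] => /setUP[-> // | cT] _.
apply/bigmax_leqP => d; rewrite !inE negb_or => /andP[dW dT].
have dTc : d \notin T :\ c by rewrite inE (negbTE dT) andbF.
have swap_sub : d |: (T :\ c) \subset ~: W.
  by rewrite subUset sub1set inE dW (subset_trans (subsetDl _ _) TW).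
have swap_card : #|d |: (T :\ c)| = k - #|W|.
  by rewrite cardsU1 dTc -cardT (cardsD1 c T) cT.
have := T_max _ swap_sub swap_card.
by rewrite big_setU1 //= [in X in _ <= X](big_setD1 c) //= leq_add2r.
Qed.

End Completion.

Section Payments.
Variables (R : realType) (W : {set C}).

Lemma affordable_supporters c :
  affordable A k R W -> c \in W -> n <= k * #|supporters A c|.
Proof.
case=> p [p_ge0 p_out p_budget p_in _] cW.
have [n0 | n_gt0] := posnP n; first by rewrite [X in X <= _]n0.
have : (1 <= #|supporters A c|%:R * (k%:R / n%:R) :> R)%R.
  rewrite -[X in (X <= _)%R](p_in c cW) (bigID (mem (supporters A c))) /=.
  rewrite [X in (_ + X)%R]big1 => [|i]; last by rewrite inE => /p_out.
  rewrite addr0 mulr_natl -sumr_const; apply: ler_sum => i _.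
  apply: le_trans (p_budget i); rewrite (bigD1 c) //= lerDl.
  by apply: sumr_ge0 => d _.
by rewrite mulrA ler_pdivlMr ?ltr0n // mul1r -natrM ler_nat mulnC.
Qed.

Lemma EJRplus_supporters c l :
  EJRplus A k R W -> c \notin W -> 0 < l <= k ->
  exists2 m, l * m <= sw A W & k * #|supporters A c| < l * n + k * m.
Proof.
move=> ejr cW l_range; have /andP[l_gt0 l_le_k] := l_range.
set rich := [set i | l <= #|A i :&: W|].
set N' := supporters A c :\: rich.
exists #|supporters A c :&: rich|.
  rewrite mulnC -sum_nat_const.
  apply: leq_trans (_ : \sum_(i in supporters A c :&: rich) #|A i :&: W| <= _).
    by apply: leq_sum => i; rewrite !inE => /andP[_].
  exact: sub_leq_sum.
suff N'_small : k * #|N'| < l * n.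
  by rewrite -(cardsID rich) mulnDr addnC ltn_add2r.
rewrite ltnNge; apply/negP => N'_large.
have c_common : c \in common A N'.
  by apply/bigcapP => i; rewrite !inE => /andP[_].
have common_ne0 : common A N' != set0 by apply/set0Pn; exists c.
have N'_card : (l%:R * n%:R / k%:R <= #|N'|%:R :> R)%R.
  rewrite ler_pdivrMr ?ltr0n ?(leq_trans l_gt0) //.
  by rewrite -!natrM ler_nat [_ * k]mulnC.
case: (ejr l N' l_range N'_card common_ne0) => [[i] | /subsetP/(_ c c_common)].
  by rewrite !inE => /andP[/negP].
by apply/negP.
Qed.

End Payments.

Lemma AV_completion_sw_ge (R : realType) (W W' : {set C}) :
  AV_completion A k W W' -> affordable A k R W -> #|W| <= k ->
  minn (k * max_support_outside W') n <= sw A W'.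
Proof.
move=> W'_AV afford Wk.
have [-> | k_gt0] := posnP k; first by rewrite mul0n min0n.
have per_candidate c :
    c \in W' -> minn (k * max_support_outside W') n <= k * #|supporters A c|.
  move=> cW'; rewrite geq_min; have [cW | cW] := boolP (c \in W).
    by rewrite (affordable_supporters afford cW) orbT.
  by rewrite leq_mul2l (AV_completion_support W'_AV cW' cW) orbT.
have : \sum_(c in W') minn (k * max_support_outside W') n
         <= \sum_(c in W') k * #|supporters A c| by apply: leq_sum.
rewrite sum_nat_const (AV_completion_card W'_AV Wk) -big_distrr /=.
by rewrite -sw_supporters leq_pmul2l.
Qed.

End Committees.

Local Open Scope ring_scope.

Lemma inv_sqrt_le_ratio (R : rcfType) (k S O : nat) :
  (0 < k)%N -> (0 < O)%N -> (O ^ 2 <= 16 * k * S ^ 2)%N ->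
  1 / (4 * Num.sqrt (k%:R : R)) <= S%:R / O%:R.
Proof.
move=> k_gt0 O_gt0 O_le.
have sqrt_gt0 : 0 < Num.sqrt (k%:R : R) by rewrite sqrtr_gt0 ltr0n.
have O_le_R : O%:R <= 4 * Num.sqrt (k%:R : R) * S%:R.
  have rhs_ge0 : 0 <= 4 * Num.sqrt (k%:R : R) * S%:R.
    by rewrite !mulr_ge0 ?ler0n ?sqrtr_ge0.
  rewrite -ler_sqr ?nnegrE ?ler0n // !exprMn sqr_sqrtr ?ler0n //.
  suff -> : (4 : R) ^+ 2 = 16%:R by rewrite -!natrX -!natrM ler_nat.
  by rewrite -natrX.
by rewrite ler_pdivlMr ?ltr0n // mul1r mulrC ler_pdivrMr ?mulr_gt0 // mulrC.
Qed.

Theorem corollary2 (R : realType) (C : finType) (n : nat)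
    (A : 'I_n -> {set C}) (k : nat) (W : {set C}) :
  (0 < n)%N -> (1 <= k <= #|C|)%N ->
  (#|W| <= k)%N ->
  (0 < opt_sw A k)%N ->
  affordable A k R W -> EJRplus A k R W ->
  forall W' : {set C}, AV_completion A k W W' ->
    util_ratio A k R W' >=
      1 / (4 * Num.sqrt (k%:R : R)) - 1 / (2 * k%:R).
Proof.
move=> n_gt0 /andP[k_gt0 _] Wk opt_gt0 afford ejr W' W'_AV.
have W_sub := AV_completion_subset W'_AV.
set S := sw A W'; set h := max_support_outside A W'.
have ejr_bound : (0 < h -> forall l, 0 < l <= k ->
    exists2 m, l * m <= S & k * h < l * n + k * m)%N.
  move=> /max_support_outsideP[c cW']; rewrite -/h => -> l l_range.
  have cW : c \notin W by apply: contra cW' => /(subsetP W_sub).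
  have [m lm_le kc_lt] := EJRplus_supporters ejr cW l_range.
  by exists m => //; apply: leq_trans lm_le (sw_subset A W_sub).
have kh_sqr := sqr_support_bound n_gt0 (max_support_outside_le_n A W')
  (AV_completion_sw_ge W'_AV afford Wk) ejr_bound.
have opt_sqr : (opt_sw A k ^ 2 <= 16 * k * S ^ 2)%N.
  by rewrite (leq_trans _ (sqr_add_bound k_gt0 kh_sqr)) // leq_sqr opt_sw_le.
apply: le_trans (inv_sqrt_le_ratio R k_gt0 opt_gt0 opt_sqr).
by rewrite gerBl divr_ge0 ?mulr_ge0 ?ler0n.
Qed.
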